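(* Let $\mathcal F$ be a proper filter on $\omega$ and consider the game $\mathfrak G(\mathrm{Fr},\omega,\mathcal F^+)$. Then (1) player I has a winning strategy if and only if $\mathcal F$ is not a weak Q-filter; (2) player II has a winning strategy if and only if $\mathcal F$ is $\omega$-diagonalizable.
   Context: A filter on $\omega$ is a family $\mathcal F\subseteq\mathcal P(\omega)$ closed under finite intersections and supersets and containing all cofinite sets; it is proper if all its members are infinite. $\mathcal F^+=\{X\subseteq\omega:\omega\setminus X\notin\mathcal F\}$. $\mathrm{Fr}$ is the family of cofinite subsets of $\omega$. $X\subseteq^*Y$ means $X\setminus Y$ is finite. Game $\mathfrak G(\mathcal X,\omega,\mathcal Z)$ (for $\mathcal X,\mathcal Z\subseteq\mathcal P(\omega)$): at each stage $k\in\omega$, player I chooses $X_k\in\mathcal X$ and player II responds with $n_k\in X_k$; II wins the play if $\{n_k:k\in\omega\}\in\mathcal Z$, otherwise I wins. $\mathcal F$ is a weak Q-filter if for every partition of $\omega$ into finite sets $\langle s_k:k\in\omega\rangle$ there is $X\in\mathcal F^+$ with $|X\cap s_k|\le1$ for all $k$. $\mathcal F$ is $\omega$-diagonalizable if there are infinite sets $X_n\subseteq\omega$ ($n\in\omega$) such that for every $Y\in\mathcal F$ there is $n$ with $X_n\subseteq^*Y$. *)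

From Stdlib Require Import Arith List.
Import ListNotations.

Definition subset_nat := nat -> Prop.

Definition finite_set (X : subset_nat) : Prop := exists N, forall m, X m -> m < N.
Definition infinite_set (X : subset_nat) : Prop := ~ finite_set X.
Definition cofinite (X : subset_nat) : Prop := finite_set (fun m => ~ X m).
Definition Fr : subset_nat -> Prop := cofinite.

Definition almost_subset (X Y : subset_nat) : Prop := finite_set (fun m => X m /\ ~ Y m).

Definition is_filter (F : subset_nat -> Prop) : Prop :=
  (forall X Y, F X -> F Y -> F (fun m => X m /\ Y m)) /\
  (forall X Y, F X -> (forall m, X m -> Y m) -> F Y) /\
  (forall X, cofinite X -> F X).

Definition proper_filter (F : subset_nat -> Prop) : Prop :=
  is_filter F /\ (forall X, F X -> infinite_set X).

Definition Fplus (F : subset_nat -> Prop) : subset_nat -> Prop :=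
  fun X => ~ F (fun m => ~ X m).

Definition prefix {A : Type} (u : nat -> A) (k : nat) : list A := map u (seq 0 k).

(* Game G(Xc, omega, Z): at stage k, I plays X_k in Xc, II answers n_k in X_k;
   II wins iff {n_k : k} in Z.
   A strategy for I maps the finite sequence of II's previous moves
   (I's own previous moves are determined by the strategy) to a move in Xc. *)
Definition I_has_winning_strategy (Xc Z : subset_nat -> Prop) : Prop :=
  exists sigma : list nat -> subset_nat,
    (forall s, Xc (sigma s)) /\
    (forall n : nat -> nat,
        (forall k, sigma (prefix n k) (n k)) ->
        ~ Z (fun m => exists k, n k = m)).

Definition II_has_winning_strategy (Xc Z : subset_nat -> Prop) : Prop :=
  exists tau : list subset_nat -> subset_nat -> nat,
    (forall s X, Xc X -> X (tau s X)) /\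
    (forall Xs : nat -> subset_nat,
        (forall k, Xc (Xs k)) ->
        Z (fun m => exists k, tau (prefix Xs k) (Xs k) = m)).

Definition finite_partition (s : nat -> subset_nat) : Prop :=
  (forall k, finite_set (s k)) /\
  (forall k l m, s k m -> s l m -> k = l) /\
  (forall m, exists k, s k m).

Definition weak_Q_filter (F : subset_nat -> Prop) : Prop :=
  forall s, finite_partition s ->
    exists X, Fplus F X /\
      (forall k a b, X a -> s k a -> X b -> s k b -> a = b).

Definition omega_diagonalizable (F : subset_nat -> Prop) : Prop :=
  exists Xs : nat -> subset_nat,
    (forall n, infinite_set (Xs n)) /\
    (forall Y, F Y -> exists n, almost_subset (Xs n) Y).

(* If II wins, II's answers to all finite runs in which I plays final segments
   form a countable family of infinite sets diagonalizing F: if each of them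
   left a point outside some Y in F, I could keep playing final segments so
   that II never enters Y. Conversely, II wins against any diagonalizing family
   by dovetailing through it, answering at stage k with a point >= k of the
   set scheduled for that stage.

   If no partition into finite sets has a positive selector, I wins by playing
   the complement of the pieces II has already touched. Conversely, from a
   winning strategy for I one builds intervals [m_k, m_(k+1)) so long that I's
   move after any history inside [0, m_k) contains all of [m_(k+1), oo); the
   points of a positive selector in every other interval would then be the
   outcome of a play according to that strategy, and that outcome is positive. *)

From Stdlib Require Import Arith Lia List Classical ClassicalEpsilon Cantor Wf_nat.
Import ListNotations.

Lemma finite_subset (A B : subset_nat) :
  finite_set A -> (forall m, B m -> A m) -> finite_set B.
Proof. intros [N HN] HBA. exists N. auto. Qed.

Lemma finite_union (A B : subset_nat) :
  finite_set A -> finite_set B -> finite_set (fun m => A m \/ B m).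
Proof.
  intros [N HN] [N' HN']. exists (N + N').
  intros m [hm | hm]; [specialize (HN m hm) | specialize (HN' m hm)]; lia.
Qed.

Lemma infinite_unbounded (A : subset_nat) :
  infinite_set A -> forall N, exists x, N <= x /\ A x.
Proof.
  intros HA N. apply NNPP; intro Hno. apply HA. exists N. intros m Am.
  apply Nat.nle_gt. intro HNm. apply Hno. eauto.
Qed.

Lemma infinite_superset (A B : subset_nat) :
  infinite_set A -> (forall m, A m -> B m) -> infinite_set B.
Proof. intros HA HAB HB. apply HA. apply (finite_subset B); assumption. Qed.

Lemma cofinite_above (C : subset_nat) :
  cofinite C -> exists N, forall y, N <= y -> C y.
Proof.
  intros [N HN]. exists N. intros y hy. apply NNPP. intro Cy.
  specialize (HN y Cy). lia.
Qed.

Lemma cofinite_ge (N : nat) : cofinite (fun y => N <= y).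
Proof. exists N. intros y hy. lia. Qed.

Lemma infinite_meets_cofinite (A C : subset_nat) :
  infinite_set A -> cofinite C -> forall N, exists y, N <= y /\ A y /\ C y.
Proof.
  intros HA HC N. destruct (cofinite_above C HC) as [N' HN'].
  destruct (infinite_unbounded A HA (N + N')) as [y [hy Ay]].
  exists y. repeat split; [lia | exact Ay | apply HN'; lia].
Qed.

Section PositiveSets.

Variable F : subset_nat -> Prop.
Hypothesis HF : is_filter F.

Lemma Fplus_mono (A B : subset_nat) :
  Fplus F A -> (forall x, A x -> B x) -> Fplus F B.
Proof.
  intros HA HAB HB. apply HA. destruct HF as [_ [Hsup _]].
  apply (Hsup _ _ HB). intros m nB Am. exact (nB (HAB m Am)).
Qed.

Lemma Fplus_infinite (A : subset_nat) : Fplus F A -> infinite_set A.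
Proof.
  intros HA Afin. apply HA. destruct HF as [_ [_ Hcof]]. apply Hcof.
  apply (finite_subset A _ Afin). intros m. apply NNPP.
Qed.

Lemma Fplus_union (A B : subset_nat) :
  Fplus F (fun x => A x \/ B x) -> Fplus F A \/ Fplus F B.
Proof.
  intro HAB. apply NNPP. intro Hno.
  apply not_or_and in Hno as [nA nB]. apply NNPP in nA, nB.
  apply HAB. destruct HF as [Hcap [Hsup _]].
  apply (Hsup _ _ (Hcap _ _ nA nB)). intros x [nAx nBx] [Ax | Bx]; auto.
Qed.

Lemma Fplus_cap_cofinite (A C : subset_nat) :
  Fplus F A -> cofinite C -> Fplus F (fun x => A x /\ C x).
Proof.
  intros HA HC HnAC. apply HA. destruct HF as [Hcap [Hsup Hcof]].
  apply (Hsup _ _ (Hcap _ _ HnAC (Hcof _ HC))).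
  intros x [nAC Cx] Ax. exact (nAC (conj Ax Cx)).
Qed.

End PositiveSets.

Lemma prefix_length {A : Type} (u : nat -> A) (k : nat) : length (prefix u k) = k.
Proof. unfold prefix. rewrite length_map, length_seq. reflexivity. Qed.

Lemma in_prefix {A : Type} (u : nat -> A) (i j : nat) : i < j -> In (u i) (prefix u j).
Proof. intro hij. apply in_map, in_seq. lia. Qed.

Lemma in_prefix_inv {A : Type} (u : nat -> A) (j : nat) (x : A) :
  In x (prefix u j) -> exists i, i < j /\ u i = x.
Proof.
  intro hx. apply in_map_iff in hx as [i [<- hi]]. apply in_seq in hi.
  exists i. split; [lia | reflexivity].
Qed.

Section Increasing.

Variable f : nat -> nat.
Hypothesis f_incr : forall i, f i < f (S i).

Lemma incr_le (i j : nat) : i <= j -> f i <= f j.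
Proof. induction 1 as [| j _ IH]; [lia |]. pose proof (f_incr j). lia. Qed.

Lemma incr_ge_id (i : nat) : i <= f i.
Proof. induction i as [| i IH]; [lia |]. pose proof (f_incr i). lia. Qed.

End Increasing.

Section IntervalPartition.

Variable m : nat -> nat.
Hypothesis m_incr : forall k, m k < m (S k).
Hypothesis m_0 : m 0 = 0.

Definition interval (k x : nat) : Prop := m k <= x < m (S k).

Lemma interval_exists (x : nat) : exists k, interval k x.
Proof.
  induction x as [| x [k hk]].
  - exists 0. unfold interval. rewrite m_0. pose proof (m_incr 0). lia.
  - destruct (Nat.eq_dec (S x) (m (S k))) as [e | e].
    + exists (S k). unfold interval. pose proof (m_incr (S k)). lia.
    + exists k. unfold interval in *. lia.
Qed.

Lemma interval_index_le (k l x y : nat) :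
  interval k x -> interval l y -> x <= y -> k <= l.
Proof.
  unfold interval. intros hx hy hxy. apply Nat.nlt_ge. intro hlk.
  pose proof (incr_le m m_incr (S l) k hlk). lia.
Qed.

Lemma interval_partition : finite_partition interval.
Proof.
  split; [| split].
  - intro k. exists (m (S k)). intros x hx. apply hx.
  - intros k l x hk hl.
    pose proof (interval_index_le k l x x hk hl (le_n x)).
    pose proof (interval_index_le l k x x hl hk (le_n x)). lia.
  - exact interval_exists.
Qed.

Definition sparse (X : subset_nat) : Prop :=
  (forall x, X x -> m 1 <= x) /\
  (forall x y, X x -> X y -> x < y -> exists k, x < m (S k) /\ m (S (S k)) <= y).

(* Keep the points of a selector lying in intervals of one parity. *)
Lemma sparse_subset_of_selector (F : subset_nat -> Prop) (HF : is_filter F)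
  (X : subset_nat) :
  Fplus F X -> (forall k a b, X a -> interval k a -> X b -> interval k b -> a = b) ->
  exists X', Fplus F X' /\ sparse X'.
Proof.
  intros HX Hsel.
  set (Xpar := fun p x => X x /\ exists k, Nat.even k = p /\ interval k x).
  assert (Hp : Fplus F (Xpar true) \/ Fplus F (Xpar false)).
  { apply Fplus_union; [exact HF |]. apply (Fplus_mono F HF X); [exact HX |].
    intros x Xx. destruct (interval_exists x) as [k hk].
    destruct (Nat.even k) eqn:E; [left | right]; split; eauto. }
  assert (Hpar : exists p, Fplus F (Xpar p)) by (destruct Hp; eauto).
  destruct Hpar as [p Hpar].
  exists (fun x => Xpar p x /\ m 1 <= x). split.
  { exact (Fplus_cap_cofinite F HF _ _ Hpar (cofinite_ge (m 1))). }
  split; [intros x [_ hx]; exact hx |].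
  intros x y [[Xx [k [ek hk]]] _] [[Xy [l [el hl]]] _] hxy.
  exists k. split; [apply hk |].
  pose proof (interval_index_le k l x y hk hl (Nat.lt_le_incl _ _ hxy)) as hkl.
  assert (k <> l) by (intros <-; specialize (Hsel k x y Xx hk Xy hl); lia).
  assert (l <> S k).
  { intros ->. rewrite Nat.even_succ, <- Nat.negb_even, ek in el.
    destruct p; discriminate. }
  pose proof (incr_le m m_incr (S (S k)) l ltac:(lia)). unfold interval in hl. lia.
Qed.

End IntervalPartition.

Section Enumeration.

Variable P : subset_nat.
Hypothesis P_unbounded : forall N, exists x, N <= x /\ P x.

Lemma least_above_exists (a : nat) :
  exists x, (P x /\ a <= x) /\ forall y, P y /\ a <= y -> x <= y.
Proof.
  destruct (P_unbounded a) as [x0 [h0 P0]].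
  destruct (dec_inh_nat_subset_has_unique_least_element (fun x => P x /\ a <= x))
    as [x [Hx _]]; [intro n; apply classic | eauto | eauto].
Qed.

Definition least_above (a : nat) : nat :=
  proj1_sig (constructive_indefinite_description _ (least_above_exists a)).

Lemma least_above_spec (a : nat) :
  (P (least_above a) /\ a <= least_above a) /\
  forall y, P y /\ a <= y -> least_above a <= y.
Proof. exact (proj2_sig (constructive_indefinite_description _ (least_above_exists a))). Qed.

Fixpoint enum (j : nat) : nat :=
  match j with 0 => least_above 0 | S j' => least_above (S (enum j')) end.

Lemma enum_in (j : nat) : P (enum j).
Proof. destruct j; apply least_above_spec. Qed.

Lemma enum_incr (j : nat) : enum j < enum (S j).
Proof. simpl. pose proof (least_above_spec (S (enum j))). lia. Qed.

Lemma enum_surj (x : nat) : P x -> exists j, enum j = x.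
Proof.
  intro Px.
  assert (H : forall j, x <= enum j -> exists i, enum i = x).
  { induction j as [| j IH]; intro hj.
    - exists 0. pose proof (proj2 (least_above_spec 0) x (conj Px (Nat.le_0_l _))).
      simpl in *. lia.
    - destruct (le_lt_dec x (enum j)) as [h | h]; [auto |].
      exists (S j). pose proof (proj2 (least_above_spec (S (enum j))) x (conj Px h)).
      simpl in *. lia. }
  exact (H x (incr_ge_id enum enum_incr x)).
Qed.

End Enumeration.

(** * Player I and weak Q-filters *)

Lemma touched_pieces_finite (s : nat -> subset_nat) (Hs : finite_partition s) (l : list nat) :
  finite_set (fun y => exists x k, In x l /\ s k x /\ s k y).
Proof.
  destruct Hs as [Hfin [Hdisj Hcov]].
  induction l as [| a l IH].
  - exists 0. intros y [x [k [[] _]]].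
  - destruct (Hcov a) as [ka hka].
    apply (finite_subset _ _ (finite_union _ _ (Hfin ka) IH)).
    intros y [x [k [[<- | hin] [hx hy]]]].
    + left. rewrite <- (Hdisj _ _ _ hx hka). exact hy.
    + right. eauto.
Qed.

Lemma I_wins_of_not_weak_Q (F : subset_nat -> Prop) :
  ~ weak_Q_filter F -> I_has_winning_strategy Fr (Fplus F).
Proof.
  intro HnQ. apply not_all_ex_not in HnQ as [s Hs].
  apply imply_to_and in Hs as [Hpart Hno].
  exists (fun l y => ~ exists x k, In x l /\ s k x /\ s k y). split.
  - intro l. apply (finite_subset _ _ (touched_pieces_finite s Hpart l)).
    intro y. apply NNPP.
  - intros n Hn HFp. apply Hno. eexists. split; [exact HFp |].
    intros k a b [i <-] ha [j <-] hb.
    destruct (lt_eq_lt_dec i j) as [[h | <-] | h]; [| reflexivity |]; exfalso.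
    + apply (Hn j). exists (n i), k. auto using in_prefix.
    + apply (Hn i). exists (n j), k. auto using in_prefix.
Qed.

Fixpoint small_lists (k M : nat) : list (list nat) :=
  match k with
  | 0 => [[]]
  | S k' => [] :: flat_map (fun a => map (cons a) (small_lists k' M)) (seq 0 M)
  end.

Lemma in_small_lists (k M : nat) (l : list nat) :
  length l <= k -> Forall (fun x => x < M) l -> In l (small_lists k M).
Proof.
  revert l. induction k as [| k IH]; intros [| a l] hlen hl; simpl in *;
    try (left; reflexivity); try lia.
  right. apply Forall_cons_iff in hl as [ha hl].
  apply in_flat_map. exists a. split; [apply in_seq; lia |].
  apply in_map, IH; [lia | exact hl].
Qed.

Definition small_lists_bound (b : list nat -> nat) (M : nat) : nat :=
  list_max (map b (small_lists M M)).

Lemma le_small_lists_bound (b : list nat -> nat) (M : nat) (l : list nat) :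
  length l <= M -> Forall (fun x => x < M) l -> b l <= small_lists_bound b M.
Proof.
  intros hlen hl. unfold small_lists_bound.
  pose proof (proj1 (list_max_le (map b (small_lists M M)) _) (le_n _)) as Hall.
  rewrite Forall_map, Forall_forall in Hall.
  exact (Hall l (in_small_lists M M l hlen hl)).
Qed.

Fixpoint interval_ends (H : nat -> nat) (k : nat) : nat :=
  match k with
  | 0 => 0
  | S k' => Nat.max (S (interval_ends H k')) (H (interval_ends H k'))
  end.

Lemma interval_ends_incr (H : nat -> nat) (k : nat) :
  interval_ends H k < interval_ends H (S k).
Proof. apply Nat.le_max_l. Qed.

Lemma interval_ends_above (H : nat -> nat) (k : nat) :
  H (interval_ends H k) <= interval_ends H (S k).
Proof. apply Nat.le_max_r. Qed.

Lemma sparse_enum_bound (H : nat -> nat) (X : subset_nat) (e : nat -> nat) :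
  sparse (interval_ends H) X -> (forall j, e j < e (S j)) -> (forall j, X (e j)) ->
  forall j, exists M, (forall i, i < j -> e i < M) /\ j <= M /\ H M <= e j.
Proof.
  intros [Hstart Hgap] e_incr Xe [| i].
  - exists 0. split; [intros i hi; lia | split; [lia |]].
    pose proof (interval_ends_above H 0). specialize (Hstart _ (Xe 0)). simpl in *. lia.
  - destruct (Hgap _ _ (Xe i) (Xe (S i)) (e_incr i)) as [k [hk1 hk2]].
    exists (interval_ends H (S k)). split; [| split].
    + intros i' hi'. pose proof (incr_le e e_incr i' i ltac:(lia)). lia.
    + pose proof (incr_ge_id e e_incr i). lia.
    + pose proof (interval_ends_above H (S k)). lia.
Qed.

Lemma play_of_bounded_histories (sigma : list nat -> subset_nat) (b : list nat -> nat)
  (Hb : forall s y, b s <= y -> sigma s y) (e : nat -> nat) :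
  (forall j, exists M,
     (forall i, i < j -> e i < M) /\ j <= M /\ small_lists_bound b M <= e j) ->
  forall j, sigma (prefix e j) (e j).
Proof.
  intros Hbound j. destruct (Hbound j) as [M [Hlt [HjM HM]]]. apply Hb.
  enough (b (prefix e j) <= small_lists_bound b M) by lia.
  apply le_small_lists_bound; [rewrite prefix_length; exact HjM |].
  apply Forall_forall. intros x hx. apply in_prefix_inv in hx as [i [hi <-]]. auto.
Qed.

Lemma not_weak_Q_of_I_wins (F : subset_nat -> Prop) (HF : is_filter F) :
  I_has_winning_strategy Fr (Fplus F) -> ~ weak_Q_filter F.
Proof.
  intros [sigma [Hlegal Hwin]] HQ.
  destruct (choice (fun s N => forall y, N <= y -> sigma s y)
                   (fun s => cofinite_above _ (Hlegal s))) as [b Hb].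
  set (H := small_lists_bound b). set (m := interval_ends H).
  destruct (HQ _ (interval_partition m (interval_ends_incr H) eq_refl)) as [X [HX Hsel]].
  destruct (sparse_subset_of_selector m (interval_ends_incr H) eq_refl F HF X HX Hsel)
    as [X' [HX' Hsparse]].
  pose proof (infinite_unbounded X' (Fplus_infinite F HF X' HX')) as Hunb.
  apply (Hwin (enum X' Hunb)).
  - apply (play_of_bounded_histories sigma b Hb).
    apply (sparse_enum_bound H X'); [exact Hsparse | apply enum_incr | apply enum_in].
  - apply (Fplus_mono F HF X' _ HX'). apply enum_surj.
Qed.

(** * Player II and omega-diagonalizability *)

Lemma II_wins_of_omega_diagonalizable (F : subset_nat -> Prop) :
  omega_diagonalizable F -> II_has_winning_strategy Fr (Fplus F).
Proof.
  intros [Xs [Hinf Hdiag]].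
  (* Cantor's pairing makes every index [n] recur at stages [to_nat (n, B)] >= [B]. *)
  set (target := fun k => Xs (fst (of_nat k))).
  set (P := fun (l : list subset_nat) (X : subset_nat) (y : nat) =>
              X y /\ target (length l) y /\ length l <= y).
  assert (HP : forall l X, Fr X -> exists y, P l X y).
  { intros l X HX.
    destruct (infinite_meets_cofinite _ _ (Hinf (fst (of_nat (length l)))) HX (length l))
      as [y [hy [Ty Xy]]].
    exists y. repeat split; assumption. }
  exists (fun l X => epsilon (inhabits 0) (P l X)). split.
  - intros l X HX. exact (proj1 (epsilon_spec _ _ (HP l X HX))).
  - intros Ys HYs HY. destruct (Hdiag _ HY) as [n [B HB]].
    set (k := to_nat (n, B)).
    assert (Hk : fst (of_nat k) = n /\ B <= k).
    { unfold k. rewrite cancel_of_to. pose proof (to_nat_non_decreasing n B).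
      split; [reflexivity | lia]. }
    destruct (epsilon_spec (inhabits 0) _ (HP (prefix Ys k) (Ys k) (HYs k))) as [_ [Ty hy]].
    unfold target in Ty. rewrite prefix_length, (proj1 Hk) in Ty. rewrite prefix_length in hy.
    enough (epsilon (inhabits 0) (P (prefix Ys k) (Ys k)) < B) by lia.
    apply HB. split; [exact Ty |]. intro C. apply C. exists k. reflexivity.
Qed.

Lemma omega_diagonalizable_of_countable_base {I : Type} (F : subset_nat -> Prop)
  (code : I -> nat) (code_inj : forall i j, code i = code j -> i = j) (A : I -> subset_nat) :
  (forall i, infinite_set (A i)) -> (forall Y, F Y -> exists i, almost_subset (A i) Y) ->
  omega_diagonalizable F.
Proof.
  intros Hinf Hdiag.
  exists (fun n x => (exists i, code i = n /\ A i x) \/ ~ (exists i, code i = n)). split.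
  - intro n. destruct (classic (exists i, code i = n)) as [[i hi] | hn].
    + apply (infinite_superset _ _ (Hinf i)). intros x Ax. left. eauto.
    + intros [N HN]. specialize (HN N (or_intror hn)). lia.
  - intros Y HY. destruct (Hdiag Y HY) as [i [N HN]]. exists (code i), N.
    intros x [[[j [hj Ajx]] | hn] nYx].
    + apply code_inj in hj as ->. exact (HN x (conj Ajx nYx)).
    + exfalso. eauto.
Qed.

Fixpoint code_list (l : list nat) : nat :=
  match l with [] => 0 | a :: l' => S (to_nat (a, code_list l')) end.

Lemma code_list_inj (l1 l2 : list nat) : code_list l1 = code_list l2 -> l1 = l2.
Proof.
  revert l2. induction l1 as [| a l1 IH]; intros [| b l2]; cbn [code_list];
    try discriminate; auto.
  intros h%Nat.succ_inj%to_nat_inj. injection h as -> h.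
  f_equal. auto.
Qed.

Fixpoint history {A : Type} (g : list A -> A) (k : nat) : list A :=
  match k with 0 => [] | S k' => history g k' ++ [g (history g k')] end.

Lemma prefix_history {A : Type} (g : list A -> A) (k : nat) :
  prefix (fun i => g (history g i)) k = history g k.
Proof.
  induction k as [| k IH]; [reflexivity |].
  unfold prefix in *. rewrite seq_S, map_app, IH. reflexivity.
Qed.

Lemma omega_diagonalizable_of_II_wins (F : subset_nat -> Prop) (HF : is_filter F) :
  II_has_winning_strategy Fr (Fplus F) -> omega_diagonalizable F.
Proof.
  intros [tau [Hlegal Hwin]].
  set (final := fun (N y : nat) => N <= y).
  set (answer := fun t N => tau (map final t) (final N)).
  apply (omega_diagonalizable_of_countable_base F code_list code_list_inj
           (fun t x => exists N, answer t N = x)).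
  - intros t [N HN].
    pose proof (Hlegal (map final t) (final N) (cofinite_ge N)).
    pose proof (HN (answer t N) (ex_intro _ N eq_refl)). unfold answer, final in *. lia.
  - intros Y HY. apply NNPP. intro Hno.
    assert (Hg : forall t, exists N, ~ Y (answer t N)).
    { intro t. apply NNPP. intro Hall. apply Hno. exists t, 0.
      intros x [[N <-] nY]. exfalso. apply Hall. exists N. exact nY. }
    destruct (choice _ Hg) as [g Hgs].
    set (Ns := fun k => g (history g k)).
    apply (Hwin (fun k => final (Ns k)) (fun k => cofinite_ge _)).
    destruct HF as [_ [Hsup _]]. apply (Hsup _ _ HY).
    intros x Yx [k <-]. apply (Hgs (history g k)).
    assert (Hrun : prefix (fun k => final (Ns k)) k = map final (history g k)).
    { rewrite <- (prefix_history g k). unfold prefix. rewrite map_map. reflexivity. }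
    unfold answer. rewrite <- Hrun. exact Yx.
Qed.

Theorem theorem2p2 (F : subset_nat -> Prop) (HF : proper_filter F) :
  (I_has_winning_strategy Fr (Fplus F) <-> ~ weak_Q_filter F) /\
  (II_has_winning_strategy Fr (Fplus F) <-> omega_diagonalizable F).
Proof.
  destruct HF as [Hfilter _]. split; split.
  - exact (not_weak_Q_of_I_wins F Hfilter).
  - exact (I_wins_of_not_weak_Q F).
  - exact (omega_diagonalizable_of_II_wins F Hfilter).
  - exact (II_wins_of_omega_diagonalizable F).
Qed.
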